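(* Let $r\geq 1$ and let $G$ be the complete $r$-partite graph with (nonempty) stable parts $V_1,\dots,V_r$, where $|V_i|\geq|V_{i+1}|$ for all $i\in\{1,\dots,r-1\}$. Define $s_r=|V_r|$ and, for $i=r-1,r-2,\dots,1$, $s_i=\max\{1+s_{i+1},|V_i|\}$. Then \[\eta(G)=\max\Bigl\{\Bigl\lceil \tfrac{s_i}{|V_i|}\Bigr\rceil : i\in\{1,\dots,r\}\Bigr\}.\] Moreover, $\eta(G)\leq r$.
   Context: All graphs are finite, simple and undirected. The complete $r$-partite graph with parts $V_1,\dots,V_r$ has vertex set $V_1\cup\cdots\cup V_r$ (disjoint), each $V_i$ stable, and every two vertices in different parts adjacent. For a vertex $v$, $N(v)$ is its set of neighbours. For a positive integer $k$, $[k]=\{1,\dots,k\}$. For a labeling $f:V(G)\to[k]$ and $S\subseteq V(G)$, $f(S)=\sum_{u\in S}f(u)$. A labeling $f:V(G)\to[k]$ is an additive $k$-coloring if $f(N(u))\neq f(N(v))$ for every edge $(u,v)$ of $G$. The additive chromatic number $\eta(G)$ is the least $k$ for which $G$ has an additive $k$-coloring. *)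

From mathcomp Require Import all_boot.
Set Implicit Arguments. Unset Strict Implicit. Unset Printing Implicit Defensive.

(* A complete r-partite graph on a finite vertex type T is given by the map
   part : T -> 'I_r sending each vertex to the index of its part; two vertices
   are adjacent iff they lie in different parts. *)
Definition kp_adj (T : finType) (r : nat) (part : T -> 'I_r) : rel T :=
  fun u v => part u != part v.

Definition kp_nbhd (T : finType) (r : nat) (part : T -> 'I_r) (v : T) : {set T} :=
  [set u | kp_adj part u v].

Definition label_sum (T : finType) (f : T -> nat) (S : {set T}) : nat :=
  \sum_(u in S) f u.

Definition additive_coloring (T : finType) (e : rel T) (k : nat) (f : T -> nat) :=
  (forall v, 1 <= f v <= k) /\
  (forall u v, e u v ->
     label_sum f [set w | e w u] <> label_sum f [set w | e w v]).

Definition eta_is (T : finType) (e : rel T) (k : nat) :=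
  (exists f, additive_coloring e k f) /\
  (forall k' f, additive_coloring e k' f -> k <= k').

(* |V_i| (0-indexed parts, i < r) *)
Definition part_size (T : finType) (r : nat) (part : T -> 'I_r) (i : nat) : nat :=
  #|[set x | val (part x) == i]|.

(* s_fuel sz r m = s_{r-1-m} (0-indexed): s_{r-1} = sz (r-1),
   s_j = max (1 + s_{j+1}) (sz j). *)
Fixpoint s_fuel (sz : nat -> nat) (r : nat) (m : nat) : nat :=
  match m with
  | 0 => sz r.-1
  | m'.+1 => maxn (1 + s_fuel sz r m') (sz (r - 2 - m'))
  end.

Definition s_seq (sz : nat -> nat) (r : nat) (i : nat) : nat := s_fuel sz r (r.-1 - i).

(* ceiling division for b > 0 *)
Definition ceil_div (a b : nat) : nat := (a + b).-1 %/ b.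

From mathcomp Require Import all_boot zify.
Set Implicit Arguments. Unset Strict Implicit. Unset Printing Implicit Defensive.

(* Since N(v) is everything outside the part of v, f(N(v)) is the total weight
   minus f(V_i) for the part V_i of v, so an additive coloring is exactly a
   labeling whose part sums f(V_1), ..., f(V_r) are pairwise distinct.
   Unfolding the recursion, s_i = |V_j| + (j - i) for some j >= i.  The j - i + 1
   distinct sums f(V_i), ..., f(V_j) are all at least |V_j|, so one of them is at
   least s_i, while it is at most k |V_l| <= k |V_i|; hence ceil(s_i / |V_i|) <= k.
   Conversely, spreading s_i as evenly as possible over V_i gives labels in
   [1, max_i ceil(s_i / |V_i|)], and the s_i are strictly decreasing, hence
   distinct.  Finally s_i <= |V_i| + r - 1 <= r |V_i|. *)

Lemma ceil_div_leq a b k : 0 < b -> (ceil_div a b <= k) = (a <= k * b).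
Proof. by move=> b_gt0; rewrite /ceil_div -ltnS ltn_divLR // mulSn; apply/idP/idP; lia. Qed.

Lemma sum_index_lt (T : eqType) (s : seq T) m : uniq s -> m <= size s ->
  \sum_(x <- s) (index x s < m) = m.
Proof.
elim: s m => [|y s IHs] [|m] //=; rewrite ?big_nil // => /andP[y_notin_s s_uniq] m_le.
  by rewrite big1_seq // => x _; rewrite ltn0.
rewrite big_cons eqxx add1n -[in RHS](IHs m) //; congr _.+1.
apply: eq_big_seq => x x_in_s; case: eqP => // eq_yx.
by rewrite eq_yx x_in_s in y_notin_s.
Qed.

Lemma nhomo_leq_in_of_step (f : nat -> nat) r :
  (forall i, i.+1 < r -> f i.+1 <= f i) -> {in gtn r &, {homo f : i j /~ i <= j}}.
Proof.
move=> f_step i j iD jD le_ji.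
apply: (@homo_leq_in _ (gtn r) f (fun x y => y <= x)) le_ji => // [y x z||k _ lt_Skr].
- by move=> le_yx le_zy; apply: leq_trans le_yx.
- by move=> k l _ lD m /andP[_ lt_ml]; apply: ltn_trans lD.
- exact: f_step.
Qed.

Lemma pigeonhole_iota (G : nat -> nat) i n m :
  {in iota i n.+1 &, injective G} -> (forall l, l \in iota i n.+1 -> m <= G l) ->
  exists2 l, l \in iota i n.+1 & m + n <= G l.
Proof.
move=> G_inj G_ge; apply/hasP; apply: contraT => /hasPn G_lt.
have := uniq_leq_size (s1 := map G (iota i n.+1)) (s2 := iota m n).
rewrite size_map !size_iota ltnn map_inj_in_uniq // iota_uniq; apply=> // _ /mapP[l l_in ->].
by rewrite mem_iota G_ge //= ltnNge G_lt.
Qed.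

Section BalancedLabel.
Variable T : finType.

Definition balanced_label (A : {set T}) (a : nat) (x : T) : nat :=
  a %/ #|A| + (index x (enum A) < a %% #|A|).

Lemma sum_balanced_label (A : {set T}) a : 0 < #|A| -> \sum_(x in A) balanced_label A a x = a.
Proof.
move=> A_gt0; rewrite big_split /= sum_nat_const -big_enum /= sum_index_lt ?enum_uniq //.
  by rewrite mulnC -divn_eq.
by rewrite -cardE ltnW // ltn_pmod.
Qed.

Lemma balanced_label_bounds (A : {set T}) a k x : 0 < #|A| -> #|A| <= a <= k * #|A| ->
  1 <= balanced_label A a x <= k.
Proof.
rewrite /balanced_label; set n := #|A| => n_gt0 a_bounds.
have := divn_eq a n; have := ltn_pmod a n_gt0.
have : 0 < a %/ n by rewrite divn_gt0 //; case/andP: a_bounds.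
case: ltnP => [idx_lt | _]; first have := leq_ltn_trans (leq0n _) idx_lt.
all: by move: (a %/ n) (a %% n) => q t /=; nia.
Qed.

End BalancedLabel.

Section SSequence.
Variables (sz : nat -> nat) (r : nat).
Local Notation s := (s_seq sz r).

Lemma s_seq_last : s r.-1 = sz r.-1.
Proof. by rewrite /s_seq subnn. Qed.

Lemma s_seqS i : i.+1 < r -> s i = maxn (s i.+1).+1 (sz i).
Proof.
move=> lt_Sir; rewrite /s_seq (_ : r.-1 - i = (r.-1 - i.+1).+1) /=; last lia.
by rewrite add1n (_ : r - 2 - (r.-1 - i.+1) = i) //; lia.
Qed.

Lemma s_seq_closed_form i : i < r -> exists2 j, i <= j < r & s i = sz j + (j - i).
Proof.
move Em: (r.-1 - i) => m; elim: m i Em => [|m IHm] i Em lt_ir.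
  by exists r.-1; rewrite (_ : i = r.-1) ?s_seq_last ?subnn ?addn0 //; lia.
rewrite s_seqS; last lia.
have [j lt_j ->] := IHm i.+1 ltac:(lia) ltac:(lia).
by rewrite /maxn; case: ltnP => _; [exists i; rewrite ?subnn ?addn0 | exists j]; lia.
Qed.

Lemma leq_sz_s_seq i : i < r -> sz i <= s i.
Proof.
case: (ltnP i.+1 r) => [lt_Sir _ | ]; first by rewrite s_seqS // leq_maxr.
by move=> le_ri lt_ir; rewrite (_ : i = r.-1) ?s_seq_last //; lia.
Qed.

Lemma s_seq_inj : {in gtn r &, injective s}.
Proof.
apply/decn_inj_in/leq_nmono_in => i j iD jD lt_ij.
apply: (@homo_ltn_in _ (gtn r) s (fun x y => y < x)) lt_ij => // [y x z||k _ lt_Skr].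
- by move=> lt_yx lt_zy; apply: ltn_trans lt_yx.
- by move=> k l _ lD m /andP[_ lt_ml]; apply: ltn_trans lD.
- by rewrite [s k](s_seqS lt_Skr) leq_max ltnSn.
Qed.

Section Nonincreasing.
Hypothesis sz_dec : {in gtn r &, {homo sz : i j /~ i <= j}}.

Lemma s_seq_leq_mul_r i : 0 < sz i -> i < r -> s i <= r * sz i.
Proof.
move=> sz_gt0 lt_ir; have [j /andP[le_ij lt_jr] ->] := s_seq_closed_form lt_ir.
have := sz_dec lt_jr lt_ir le_ij; nia.
Qed.

Lemma s_seq_leq_of_inj (G : nat -> nat) k :
  {in gtn r &, injective G} -> (forall l, l < r -> sz l <= G l <= k * sz l) ->
  forall i, i < r -> s i <= k * sz i.
Proof.
move=> G_inj G_bounds i lt_ir.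
have [j /andP[le_ij lt_jr] ->] := s_seq_closed_form lt_ir.
have in_range l : l \in iota i (j - i).+1 -> [/\ i <= l, l <= j & l < r].
  by rewrite mem_iota => /andP[le_il lt_l]; split; lia.
have G_inj_iota : {in iota i (j - i).+1 &, injective G}.
  by move=> a b /in_range[_ _ lt_ar] /in_range[_ _ lt_br]; apply: G_inj.
have G_ge l : l \in iota i (j - i).+1 -> sz j <= G l.
  case/in_range=> _ le_lj lt_lr; apply: leq_trans (sz_dec lt_jr lt_lr le_lj) _.
  by case/andP: (G_bounds l lt_lr).
have [l /in_range[le_il _ lt_lr] le_G] := pigeonhole_iota G_inj_iota G_ge.
apply: (leq_trans le_G); case/andP: (G_bounds l lt_lr) => _ /leq_trans; apply.
by rewrite leq_mul2l (sz_dec lt_lr lt_ir le_il) orbT.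
Qed.

End Nonincreasing.

End SSequence.

Section CompleteMultipartite.
Variables (T : finType) (r : nat) (part : T -> 'I_r).

Definition part_set (i : nat) : {set T} := [set x | val (part x) == i].

Definition part_sum (f : T -> nat) (i : nat) : nat := label_sum f (part_set i).

Lemma nbhd_add_part_sum f u :
  label_sum f [set w | kp_adj part w u] + part_sum f (part u) = \sum_x f x.
Proof.
rewrite /part_sum /label_sum [RHS](bigID (fun x => part x != part u)) /=.
by congr (_ + _); apply: eq_bigl => x; rewrite !inE ?negbK.
Qed.

Lemma part_sum_bounds f k i : (forall v, 1 <= f v <= k) ->
  part_size part i <= part_sum f i <= k * part_size part i.
Proof.
move=> f_range; rewrite /part_sum /label_sum /part_size mulnC -sum_nat_const -sum1_card.
by apply/andP; split; apply: leq_sum => x _; case/andP: (f_range x).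
Qed.

Hypothesis part_surj : forall i : 'I_r, exists x, part x = i.

Lemma part_size_gt0 i : i < r -> 0 < part_size part i.
Proof.
move=> lt_ir; have [x px] := part_surj (Ordinal lt_ir).
by apply/card_gt0P; exists x; rewrite inE px.
Qed.

Lemma kp_additive_coloringP k f :
  additive_coloring (kp_adj part) k f <->
  (forall v, 1 <= f v <= k) /\ {in gtn r &, injective (part_sum f)}.
Proof.
split=> [[f_range f_adj] | [f_range f_inj]]; split=> //.
- move=> i j lt_ir lt_jr eq_sum; apply/eqP; apply: contraT => neq_ij.
  have [x px] := part_surj (Ordinal lt_ir); have [y py] := part_surj (Ordinal lt_jr).
  have adj_xy : kp_adj part x y by rewrite /kp_adj px py.
  have := f_adj x y adj_xy.
  by have := nbhd_add_part_sum f x; have := nbhd_add_part_sum f y; rewrite px py /=; lia.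
- move=> u v /negP neq_uv eq_nbhd; apply: neq_uv; rewrite -val_eqE; apply/eqP.
  apply: f_inj (ltn_ord _) (ltn_ord _) _.
  by have := nbhd_add_part_sum f u; have := nbhd_add_part_sum f v; lia.
Qed.

Lemma kp_additive_coloring_of_part_sums (a : nat -> nat) k :
  {in gtn r &, injective a} ->
  (forall i, i < r -> part_size part i <= a i <= k * part_size part i) ->
  exists f, additive_coloring (kp_adj part) k f.
Proof.
move=> a_inj a_bounds.
pose f x := balanced_label (part_set (part x)) (a (part x)) x.
have f_sum i : i < r -> part_sum f i = a i.
  move=> lt_ir; have := sum_balanced_label (a i) (part_size_gt0 lt_ir).
  rewrite /part_sum /label_sum => <-.
  by apply: eq_bigr => x; rewrite inE => /eqP px; rewrite /f px.
exists f; apply/kp_additive_coloringP; split.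
  by move=> v; apply: balanced_label_bounds; [apply: part_size_gt0 | apply: a_bounds].
by move=> i j lt_ir lt_jr; rewrite !f_sum //; apply: a_inj.
Qed.

End CompleteMultipartite.

Theorem mainTheorem3 (r : nat) (T : finType) (part : T -> 'I_r) :
  1 <= r ->
  (forall i : 'I_r, exists x : T, part x = i) ->
  (forall i : nat, i.+1 < r -> part_size part i.+1 <= part_size part i) ->
  eta_is (kp_adj part)
    (\max_(i < r) ceil_div (s_seq (part_size part) r i) (part_size part i))
  /\ \max_(i < r) ceil_div (s_seq (part_size part) r i) (part_size part i) <= r.
Proof.
move=> _ part_surj sz_step.
have sz_gt0 := part_size_gt0 part_surj.
set sz := part_size part in sz_gt0 sz_step *; set K := \max_(i < r) _.
have sz_dec := nhomo_leq_in_of_step sz_step.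
have s_leqK i : i < r -> s_seq sz r i <= K * sz i.
  move=> lt_ir; rewrite -ceil_div_leq ?sz_gt0 //.
  exact: (leq_bigmax (Ordinal lt_ir)).
split; last first.
  by apply/bigmax_leqP => i _; rewrite ceil_div_leq ?sz_gt0 // s_seq_leq_mul_r ?sz_gt0.
split.
  apply: (kp_additive_coloring_of_part_sums part_surj (@s_seq_inj sz r)) => i lt_ir.
  by rewrite leq_sz_s_seq ?s_leqK.
move=> k f /(kp_additive_coloringP part_surj) [f_range f_inj].
apply/bigmax_leqP => i _; rewrite ceil_div_leq ?sz_gt0 //.
by apply: (s_seq_leq_of_inj sz_dec f_inj) => // l _; apply: part_sum_bounds.
Qed.
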